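(* Let $L,N$ be finite simplicial complexes, $\varphi: L\to N$ a surjective simplicial finite-fibration and $n\ge2$. Then $\mathrm{TC}_n(\varphi)\le\min\{\mathrm{TC}_n(L),\mathrm{TC}_n(N)\}$.
   Context: Simplicial complexes are abstract and edge-path connected; $K^n$ is the $n$-fold categorical product (vertex set $\mathrm{VX}(K)^n$; a set of vertices is a simplex iff each coordinate projection is a simplex). Simplicial maps $f,g: K\to K'$ are contiguous if $f(\sigma)\cup g(\sigma)$ is a simplex for every simplex $\sigma$; $f\sim g$ if joined by a finite chain of contiguous simplicial maps. $\mathrm{SD}(\varphi_1,\dots,\varphi_m)$ for simplicial maps $K\to K'$ is the least $k\ge0$ such that $K$ is a union of subcomplexes $K_0,\dots,K_k$ with $\varphi_i|_{K_j}\sim\varphi_l|_{K_j}$ for all $i,l,j$. With $p_i: K^n\to K$ the projections, $\mathrm{TC}_n(K)=\mathrm{SD}(p_1,\dots,p_n)$, and for surjective $\varphi: L\to N$, $\mathrm{TC}_n(\varphi)=\mathrm{SD}(\varphi\circ p_1,\dots,\varphi\circ p_n)$ with $p_i: L^n\to L$. $I_m$ is the complex with vertices $0,\dots,m$ and edges $\{i,i+1\}$; $\varphi: L\to N$ is a simplicial finite-fibration if for every finite complex $M$, $m\ge1$, inclusion $i: M\times\{0\}\to M\times I_m$ and simplicial $g: M\times\{0\}\to L$, $G: M\times I_m\to N$ with $\varphi\circ g=G\circ i$, there is simplicial $\widetilde G: M\times I_m\to L$ with $\widetilde G\circ i=g$, $\varphi\circ\widetilde G=G$. *)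

(* Finite abstract simplicial complexes are represented as a
   finite vertex type V together with a boolean predicate S on {set V}
   (the simplices). *)
From Stdlib Require Import Relations.Relation_Operators.
From mathcomp Require Import all_boot.
Set Implicit Arguments. Unset Strict Implicit. Unset Printing Implicit Defensive.

Definition is_complex (V : finType) (S : pred {set V}) : Prop :=
  [/\ (forall s, S s -> s != set0),
      (forall s t : {set V}, S s -> t \subset s -> t != set0 -> S t) &
      (forall v, S [set v])].

Definition connected (V : finType) (S : pred {set V}) : Prop :=
  forall u v : V, connect [rel x y | S [set x; y]] u v.

Definition simplicial (V W : finType) (SV : pred {set V}) (SW : pred {set W})
  (f : V -> W) : Prop := forall s, SV s -> SW (f @: s).

(* categorical n-fold product K^n : vertices VX(K)^n, a set of vertices is a
   simplex iff (nonempty and) each coordinate projection is a simplex *)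
Definition powS (V : finType) (S : pred {set V}) (n : nat)
  : pred {set {ffun 'I_n -> V}} :=
  fun s => (s != set0) && [forall i : 'I_n, S [set (x : {ffun 'I_n -> V}) i | x in s]].

Arguments powS {V} S n _.

Definition prodS (V W : finType) (SV : pred {set V}) (SW : pred {set W})
  : pred {set V * W} :=
  fun s => [&& s != set0, SV [set (x : V * W).1 | x in s] & SW [set (x : V * W).2 | x in s]].

Definition intervalS (m : nat) : pred {set 'I_m.+1} :=
  fun s => [exists i, s == [set i]] ||
           [exists i, exists j, (val j == (val i).+1) && (s == [set i; j])].

Arguments intervalS m _ : clear implicits.

Definition subcomplex (V : finType) (S P : pred {set V}) : Prop :=
  (forall s, P s -> S s) /\
  (forall s t : {set V}, P s -> t \subset s -> t != set0 -> P t).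

Definition contig (V W : finType) (P : pred {set V}) (SW : pred {set W})
  (f g : V -> W) : Prop := forall s, P s -> SW (f @: s :|: g @: s).

Definition homot (V W : finType) (P : pred {set V}) (SW : pred {set W})
  (f g : V -> W) : Prop := clos_refl_trans (V -> W) (contig P SW) f g.

Definition SD_le (V W : finType) (SV : pred {set V}) (SW : pred {set W})
  (m : nat) (phi : 'I_m -> V -> W) (k : nat) : Prop :=
  exists Ks : 'I_k.+1 -> pred {set V},
    [/\ (forall j, subcomplex SV (Ks j)),
        (forall s, SV s -> exists j, Ks j s) &
        (forall i l j, homot (Ks j) SW (phi i) (phi l))].

Definition TCn_le (V : finType) (S : pred {set V}) (n k : nat) : Prop :=
  SD_le (powS S n) S (fun i (x : {ffun 'I_n -> V}) => x i) k.

Definition TCmap_le (VL VN : finType) (SL : pred {set VL}) (SN : pred {set VN})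
  (phi : VL -> VN) (n k : nat) : Prop :=
  SD_le (powS SL n) SN (fun i (x : {ffun 'I_n -> VL}) => phi (x i)) k.

(* simplicial finite-fibration; M x {0} is identified with M *)
Definition fin_fibration (VL VN : finType) (SL : pred {set VL})
  (SN : pred {set VN}) (phi : VL -> VN) : Prop :=
  forall (VM : finType) (SM : pred {set VM}), is_complex SM -> connected SM ->
  forall (m : nat), 0 < m ->
  forall (g : VM -> VL) (G : VM * 'I_m.+1 -> VN),
    simplicial SM SL g -> simplicial (prodS SM (intervalS m)) SN G ->
    (forall v, phi (g v) = G (v, ord0)) ->
    exists Gt : VM * 'I_m.+1 -> VL,
      [/\ simplicial (prodS SM (intervalS m)) SL Gt,
          (forall v, Gt (v, ord0) = g v) &
          (forall x, phi (Gt x) = G x)].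

(* Both bounds come from transporting a sectional-category cover.  Composing
   with the simplicial map phi turns a cover of L^n witnessing TC_n(L) into one
   witnessing TC_n(phi); pulling back along the simplicial map
   phi^n : L^n -> N^n turns a cover of N^n witnessing TC_n(N) into one witnessing
   TC_n(phi). *)
From Stdlib Require Import Relations.Relation_Operators FunctionalExtensionality.
From mathcomp Require Import all_boot.
Set Implicit Arguments. Unset Strict Implicit. Unset Printing Implicit Defensive.

Definition subset_closed (V : finType) (S : pred {set V}) : Prop :=
  forall s t : {set V}, S s -> t \subset s -> t != set0 -> S t.

Section Homotopy.

Variables (V W : finType) (P : pred {set V}) (SW : pred {set W}).

Lemma homot_map (V' W' : finType) (P' : pred {set V'}) (SW' : pred {set W'})
    (F : (V -> W) -> V' -> W') (f g : V -> W) :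
  (forall f g, contig P SW f g -> contig P' SW' (F f) (F g)) ->
  homot P SW f g -> homot P' SW' (F f) (F g).
Proof.
move=> contigF; elim=> [f1 f2 /contigF|f1|f1 f2 f3 _ IH12 _ IH23].
- exact: rt_step.
- exact: rt_refl.
- exact: rt_trans IH12 IH23.
Qed.

Lemma homot_comp (W' : finType) (SW' : pred {set W'}) (h : W -> W') f g :
  simplicial SW SW' h -> homot P SW f g -> homot P SW' (h \o f) (h \o g).
Proof.
move=> h_simpl; apply: (homot_map (F := fun f => h \o f)) => f1 f2 contig12 s Ps.
by rewrite (imset_comp h f1) (imset_comp h f2) -imsetU; apply/h_simpl/contig12.
Qed.

Lemma homot_precomp (U : finType) (Q : pred {set U}) (F : U -> V) f g :
  (forall s, Q s -> P (F @: s)) ->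
  homot P SW f g -> homot Q SW (f \o F) (g \o F).
Proof.
move=> FQP; apply: (homot_map (F := fun f => f \o F)) => f1 f2 contig12 s Qs.
by rewrite (imset_comp f1 F) (imset_comp f2 F); apply/contig12/FQP.
Qed.

End Homotopy.

Section SectionalDistance.

Variables (V W : finType) (SV : pred {set V}) (SW : pred {set W}) (m : nat).

Lemma SD_le_comp (W' : finType) (SW' : pred {set W'}) (h : W -> W')
    (phi : 'I_m -> V -> W) k :
  simplicial SW SW' h -> SD_le SV SW phi k ->
  SD_le SV SW' (fun i => h \o phi i) k.
Proof.
move=> h_simpl [Ks [Ks_sub Ks_cover Ks_homot]].
by exists Ks; split=> // i l j; apply: homot_comp (Ks_homot i l j).
Qed.

Lemma subcomplex_preimage (U : finType) (SU : pred {set U}) (F : U -> V)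
    (P : pred {set V}) :
  subset_closed SU -> subcomplex SV P ->
  subcomplex SU [pred s | SU s && P (F @: s)].
Proof.
move=> SU_closed [_ P_closed]; split=> [s /andP[] //|s t /andP[SUs Ps] ts t0].
apply/andP; split; first exact: SU_closed ts t0.
by apply: P_closed Ps (imsetS F ts) _; rewrite imset_eq0.
Qed.

Lemma SD_le_precomp (U : finType) (SU : pred {set U}) (F : U -> V)
    (phi : 'I_m -> V -> W) k :
  subset_closed SU -> simplicial SU SV F -> SD_le SV SW phi k ->
  SD_le SU SW (fun i => phi i \o F) k.
Proof.
move=> SU_closed F_simpl [Ks [Ks_sub Ks_cover Ks_homot]].
exists (fun j => [pred s | SU s && Ks j (F @: s)]); split.
- by move=> j; apply: subcomplex_preimage.
- by move=> s SUs; have [j Ksj] := Ks_cover _ (F_simpl _ SUs); exists j; apply/andP.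
- by move=> i l j; apply: homot_precomp (Ks_homot i l j) => s /andP[].
Qed.

End SectionalDistance.

Section Powers.

Variables (V W : finType) (SV : pred {set V}) (SW : pred {set W}) (n : nat).

Definition pow_map (phi : V -> W) (x : {ffun 'I_n -> V}) : {ffun 'I_n -> W} :=
  [ffun i => phi (x i)].

Lemma powS_subset_closed : subset_closed SV -> subset_closed (powS SV n).
Proof.
move=> SV_closed s t /andP[_ /forallP s_proj] ts t0; apply/andP; split=> //.
apply/forallP=> i; apply: SV_closed (s_proj i) (imsetS _ ts) _.
by rewrite imset_eq0.
Qed.

Lemma simplicial_pow_map (phi : V -> W) :
  simplicial SV SW phi -> simplicial (powS SV n) (powS SW n) (pow_map phi).
Proof.
move=> phi_simpl s /andP[s0 /forallP s_proj]; apply/andP; split.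
  by rewrite imset_eq0.
apply/forallP=> i.
have -> : [set y i | y : {ffun 'I_n -> W} in pow_map phi @: s] =
          phi @: [set x i | x : {ffun 'I_n -> V} in s].
  by rewrite -!imset_comp; apply: eq_imset => x /=; rewrite ffunE.
exact: phi_simpl.
Qed.

End Powers.

Theorem theorem5p3 (VL VN : finType) (SL : pred {set VL}) (SN : pred {set VN})
  (phi : VL -> VN) (n : nat) :
  is_complex SL -> is_complex SN -> connected SL -> connected SN ->
  simplicial SL SN phi -> (forall y, exists x, phi x = y) ->
  fin_fibration SL SN phi -> 2 <= n ->
  (forall k, TCn_le SL n k -> TCmap_le SL SN phi n k) /\
  (forall k, TCn_le SN n k -> TCmap_le SL SN phi n k).
Proof.
move=> [_ SL_closed _] _ _ _ phi_simpl _ _ _; split=> k TCk.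
  exact: SD_le_comp phi_simpl TCk.
have proj_pow_map (i : 'I_n) :
    (fun x : {ffun 'I_n -> VL} => phi (x i)) = (fun y => y i) \o pow_map phi.
  by apply: functional_extensionality => x /=; rewrite ffunE.
rewrite /TCmap_le (functional_extensionality _ _ proj_pow_map).
apply: SD_le_precomp TCk.
  exact: powS_subset_closed.
exact: simplicial_pow_map.
Qed.
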